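(* All $(\mathfrak g,K)$-modules $\mathfrak F_\beta$ with $\beta\in\mathbb C$, $\beta\ne0$, are isomorphic.
   Context: $G=\mathrm{SU}(2,1)=\{g\in\mathrm{SL}_3(\mathbb C):\bar g^t\,\mathrm{diag}(1,1,-1)\,g=\mathrm{diag}(1,1,-1)\}$ with maximal compact subgroup $K$ (the block-diagonal elements with blocks of sizes $2,1$) and unipotent subgroup $N=\{n(b,r)=\begin{pmatrix}1+ir-\frac{|b|^2}2&b&-ir+\frac{|b|^2}2\\-\bar b&1&\bar b\\ ir-\frac{|b|^2}2&b&1-ir+\frac{|b|^2}2\end{pmatrix}:b\in\mathbb C,r\in\mathbb R\}$. $\chi_\beta(n(b,r))=e^{2\pi i\,\mathrm{Re}(\bar\beta b)}$. $\mathfrak F_\beta$ is the space of smooth right-$K$-finite functions $F$ on $G$ with $F(ng)=\chi_\beta(n)F(g)$ for $n\in N$, $g\in G$, a $(\mathfrak g,K)$-module under right translation by $K$ and right differentiation by the Lie algebra $\mathfrak g$ of $G$. *)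

From HB Require Import structures.
From mathcomp Require Import all_boot all_order all_algebra.
From mathcomp Require Import all_classical all_reals all_analysis.
From mathcomp Require Import complex.
Set Implicit Arguments. Unset Strict Implicit. Unset Printing Implicit Defensive.
Import Order.TTheory GRing.Theory Num.Theory numFieldTopology.Exports numFieldNormedType.Exports.
Local Open Scope ring_scope.
Local Open Scope classical_set_scope.

Section SU21.
Variable R : realType.

Definition C : numClosedFieldType := R[i].
Definition ofR (x : R) : C := (x +i* 0)%C.
Definition iR (x : R) : C := (0 +i* x)%C.
Definition ReC (z : C) : R := complex.Re z.
Definition expi (t : R) : C := (cos t +i* sin t)%C.

Notation M := 'M[C]_3.

Definition adj (g : M) : M := (map_mx (fun z : C => z^*) g)^T.
Definition Jmx : M :=
  \matrix_(i < 3, j < 3) (if i == j then (if (i : nat) == 2%N then -1 else 1) else 0).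

Definition G : set M := [set g | adj g *m Jmx *m g = Jmx /\ \det g = 1].
Definition K : set M :=
  [set k | G k /\ k 0 2 = 0 /\ k 1 2 = 0 /\ k 2 0 = 0 /\ k 2 1 = 0].

Definition nmat (b : C) (r : R) : M :=
  let ir := iR r in let h := (b * b^*) / 2 in
  \matrix_(i < 3, j < 3)
    match (i : nat), (j : nat) with
    | O, O => 1 + ir - h | O, S O => b | O, _ => - ir + h
    | S O, O => - b^*    | S O, S O => 1 | S O, _ => b^*
    | _, O => ir - h     | _, S O => b | _, _ => 1 - ir + h
    end.
Definition N : set M := [set n | exists b r, n = nmat b r].
(* chi_beta(n(b,r)) = exp(2 pi i Re(conj(beta) b)) *)
Definition chi (beta b : C) : C := expi (2 * pi * ReC (beta^* * b)).

Definition su21 : set M := [set X | adj X *m Jmx + Jmx *m X = 0 /\ \tr X = 0].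

Definition mexp (X : M) : M :=
  lim ((fun n => \sum_(k < n) (k`!%:R : C)^-1 *: X ^+ k) @ \oo).

(* functions on G are encoded as functions on M vanishing off G *)
Definition rtrans (k : M) (F : M -> C) : M -> C := fun g => F (g *m k).
Definition dq (F : M -> C) (X g : M) (t : R) : C :=
  (F (g *m mexp (ofR t *: X)) - F g) / ofR t.
Definition rder (X : M) (F : M -> C) : M -> C :=
  fun g => if `[< G g >] then lim (dq F X g @ (0 : R)^') else 0.
Definition iter_der (Xs : seq M) (F : M -> C) : M -> C := foldr rder F Xs.

Definition smooth (F : M -> C) : Prop :=
  forall Xs : seq M, (forall X, X \in Xs -> su21 X) ->
    {within G, continuous (iter_der Xs F)} /\
    (forall X g, su21 X -> G g -> cvg (dq (iter_der Xs F) X g @ (0 : R)^')).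

Definition Kfinite (F : M -> C) : Prop :=
  exists fs : seq (M -> C), forall k, K k ->
    exists a : nat -> C,
      rtrans k F = (fun g => \sum_(j < size fs) a j * nth (fun _ => 0) fs j g).

Definition Fbeta (beta : C) : set (M -> C) :=
  [set F | (forall g, ~ G g -> F g = 0) /\
           (forall b r g, G g -> F (nmat b r *m g) = chi beta b * F g) /\
           smooth F /\ Kfinite F].

Definition gK_iso (A B : set (M -> C)) (Phi : (M -> C) -> (M -> C)) : Prop :=
  (forall F, A F -> B (Phi F)) /\
  (forall F1 F2, A F1 -> A F2 -> Phi F1 = Phi F2 -> F1 = F2) /\
  (forall H, B H -> exists2 F, A F & Phi F = H) /\
  [/\
      (forall (a : C) F1 F2, A F1 -> A F2 ->
          Phi (fun g => a * F1 g + F2 g) = (fun g => a * Phi F1 g + Phi F2 g)),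
      (forall k F, K k -> A F -> Phi (rtrans k F) = rtrans k (Phi F)) &
      (forall X F, su21 X -> A F -> Phi (rder X F) = rder X (Phi F))].

End SU21.

(* The diagonal subgroup M A of SU(2,1) normalises N: the element t = m(u) a(p)
   conjugates n(b, r) to n(p u^3 b, p^2 r), and p u^3 (|u| = 1, p > 0) runs
   through all of C^x.  Taking p u^3 = conj(beta2) / conj(beta1) turns chi_beta1
   into chi_beta2, so the left translation F |-> F(t .) maps F_beta1 onto
   F_beta2; being a left translation it commutes with the right actions of K
   and of the Lie algebra, and it is inverted by the left translation by
   t^-1. *)

From HB Require Import structures.
From mathcomp Require Import all_boot all_order all_algebra.
From mathcomp Require Import all_classical all_reals all_analysis.
From mathcomp Require Import complex.
From mathcomp Require Import ring.
Import Order.TTheory GRing.Theory Num.Theory numFieldTopology.Exports numFieldNormedType.Exports.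
Local Open Scope ring_scope.
Local Open Scope classical_set_scope.

Lemma ord3P (P : 'I_3 -> Prop) : P 0 -> P 1 -> P 2 -> forall i, P i.
Proof.
move=> P0 P1 P2 [[|[|[|i]]] lti] //.
- by have -> : Ordinal lti = 0 by apply/val_inj.
- by have -> : Ordinal lti = 1 by apply/val_inj.
- by have -> : Ordinal lti = 2 by apply/val_inj.
Qed.

Lemma mulmx3E (K : pzRingType) m n (A : 'M[K]_(m, 3)) (B : 'M[K]_(3, n)) i j :
  (A *m B) i j = A i 0 * B 0 j + A i 1 * B 1 j + A i 2 * B 2 j.
Proof.
rewrite !mxE !big_ord_recr big_ord0 /= add0r.
by congr (_ * _ + _ * _ + _ * _); congr (_ _ _); apply/val_inj.
Qed.

Lemma det_mx22 (K : comRingType) (A : 'M[K]_2) :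
  \det A = A 0 0 * A 1 1 - A 0 1 * A 1 0.
Proof.
rewrite (expand_det_row _ 0) !big_ord_recr big_ord0 /cofactor !det_mx11 !mxE /=.
have -> : widen_ord (leqnSn 1) ord_max = 0 :> 'I_2 by apply/val_inj.
have -> : lift 0 (0 : 'I_1) = 1 :> 'I_2 by apply/val_inj.
have -> : ord_max = 1 :> 'I_2 by apply/val_inj.
have -> : lift 1 (0 : 'I_1) = 0 :> 'I_2 by apply/val_inj.
by rewrite /= expr0 expr1; ring.
Qed.

Lemma det_mx33 (K : comRingType) (A : 'M[K]_3) :
  \det A = A 0 0 * (A 1 1 * A 2 2 - A 1 2 * A 2 1)
          - A 0 1 * (A 1 0 * A 2 2 - A 1 2 * A 2 0)
          + A 0 2 * (A 1 0 * A 2 1 - A 1 1 * A 2 0).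
Proof.
rewrite (expand_det_row _ 0) !big_ord_recr big_ord0 /cofactor !det_mx22 !mxE /=.
have -> : widen_ord (leqnSn 2) (widen_ord (leqnSn 1) ord_max) = 0 :> 'I_3.
  exact/val_inj.
have -> : widen_ord (leqnSn 2) ord_max = 1 :> 'I_3 by apply/val_inj.
have -> : ord_max = 2 :> 'I_3 by apply/val_inj.
have -> : lift 0 (0 : 'I_2) = 1 :> 'I_3 by apply/val_inj.
have -> : lift 0 (1 : 'I_2) = 2 :> 'I_3 by apply/val_inj.
have -> : lift 1 (0 : 'I_2) = 0 :> 'I_3 by apply/val_inj.
have -> : lift 1 (1 : 'I_2) = 2 :> 'I_3 by apply/val_inj.
have -> : lift 2 (0 : 'I_2) = 0 :> 'I_3 by apply/val_inj.
have -> : lift 2 (1 : 'I_2) = 1 :> 'I_3 by apply/val_inj.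
by rewrite /= expr0 expr1 expr2; ring.
Qed.

Lemma mulmx_continuous {K : numFieldType} {m n p : nat} (A : 'M[K]_(m, n)) :
  continuous (fun B : 'M[K]_(n, p) => A *m B).
Proof.
have entry_cont i j : continuous (fun B : 'M[K]_(n, p) => (A *m B) i j).
  under eq_fun do rewrite mxE.
  apply: continuous_big => [|k _]; first exact: add_continuous.
  move=> B; apply: (@continuousM K 'M[K]_(n, p) (fun=> A i k) (fun B' => B' k j)).
    exact: cst_continuous.
  exact: coord_continuous.
move=> B W /= [P nbhsP sPW].
pose PAB ij B' := P ij.1 ij.2 ((A *m B') ij.1 ij.2).
apply: (@filterS _ _ _ [set B' | forall ij : 'I_m * 'I_p, PAB ij B']).
  by move=> B' PB'; apply: sPW => i j; exact: (PB' (i, j)).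
apply: (@filter_forall _ _ PAB (nbhs B)) => -[i j].
exact: entry_cont B _ (nbhsP i j).
Qed.

Lemma continuous_within_comp {T U V : topologicalType} {A : set T} {B : set U}
    {f : T -> U} {h : U -> V} :
  continuous f -> (forall x, A x -> B (f x)) ->
  {within B, continuous h} -> {within A, continuous (h \o f)}.
Proof.
move=> cf fAB /subspace_continuousP ch; apply/subspace_continuousP => x Ax.
apply: cvg_comp (ch _ (fAB _ Ax)) => W /= BW.
have := cf x _ BW; apply: (@filterS _ (nbhs x)) => y /[swap] Ay; apply; exact: fAB.
Qed.

Section SU21.
Context {R : realType}.
Notation M := 'M[C R]_3.
Notation J := (Jmx R).

Lemma adjM (A B : M) : adj (A *m B) = adj B *m adj A.
Proof. by rewrite /adj map_mxM trmx_mul. Qed.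

Lemma adj1 : adj (1 : M) = 1.
Proof. by rewrite /adj map_mx1 trmx1. Qed.

Lemma mulJJ : J *m J = 1.
Proof.
apply/matrixP; elim/ord3P; elim/ord3P; rewrite mulmx3E !mxE /=.
all: by rewrite ?(mulrNN, mulr1, mulr0, mul0r, addr0, add0r).
Qed.

Lemma G_mul (g h : M) : G g -> G h -> G (g *m h).
Proof.
move=> [gJ detg] [hJ deth]; split; last by rewrite det_mulmx detg deth mulr1.
rewrite adjM.
have -> : adj h *m adj g *m J *m (g *m h) = adj h *m (adj g *m J *m g) *m h.
  by rewrite !mulmxA.
by rewrite gJ hJ.
Qed.

Definition Jinv (g : M) : M := J *m adj g *m J.

Definition ltrans (t : M) (F : M -> C R) : M -> C R := fun g => F (t *m g).

Lemma ltrans_rtrans (t k : M) F : ltrans t (rtrans k F) = rtrans k (ltrans t F).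
Proof. by apply/funext => g; rewrite /ltrans /rtrans mulmxA. Qed.

Lemma dq_ltrans (t : M) F X g : dq (ltrans t F) X g = dq F X (t *m g).
Proof. by apply/funext => x; rewrite /dq /ltrans mulmxA. Qed.

Lemma Kfinite_ltrans (t : M) F : Kfinite F -> Kfinite (ltrans t F).
Proof.
move=> [fs Ffin]; exists (map (ltrans t) fs) => k Kk.
have [a Fk] := Ffin k Kk; exists a.
rewrite -ltrans_rtrans Fk size_map; apply/funext => g.
by apply: eq_bigr => j _; rewrite (nth_map (fun _ => 0)).
Qed.

Section ElementOfG.
Context {t : M} (Gt : G t).

Lemma mulJinvmx : Jinv t *m t = 1.
Proof. by have [tJ _] := Gt; rewrite /Jinv -!mulmxA (mulmxA (adj t)) tJ mulJJ. Qed.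

Lemma mulmxJinv : t *m Jinv t = 1.
Proof. exact/mulmx1C/mulJinvmx. Qed.

Lemma G_Jinv : G (Jinv t).
Proof.
have [tJ dett] := Gt; split.
  rewrite -[in LHS]tJ -!mulmxA mulmxJinv mulmx1 !mulmxA -adjM mulmxJinv adj1.
  by rewrite mul1mx.
have := congr1 determinant mulJinvmx.
by rewrite det_mulmx dett mulr1 det1.
Qed.

Lemma G_lmul g : G (t *m g) <-> G g.
Proof.
split=> [Gtg|]; last exact: G_mul.
have -> : g = Jinv t *m (t *m g) by rewrite mulmxA mulJinvmx mul1mx.
by apply: G_mul => //; exact: G_Jinv.
Qed.

Lemma ltransK : cancel (ltrans t) (ltrans (Jinv t)).
Proof. by move=> F; apply/funext => g; rewrite /ltrans mulmxA mulmxJinv mul1mx. Qed.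

Lemma ltransKV : cancel (ltrans (Jinv t)) (ltrans t).
Proof. by move=> F; apply/funext => g; rewrite /ltrans mulmxA mulJinvmx mul1mx. Qed.

Lemma rder_ltrans F X : rder X (ltrans t F) = ltrans t (rder X F).
Proof.
apply/funext => g; rewrite /rder {2}/ltrans dq_ltrans.
by rewrite (asbool_equiv_eq (G_lmul g)).
Qed.

Lemma iter_der_ltrans F Xs : iter_der Xs (ltrans t F) = ltrans t (iter_der Xs F).
Proof. by elim: Xs => //= X Xs ->; rewrite rder_ltrans. Qed.

Lemma smooth_ltrans F : smooth F -> smooth (ltrans t F).
Proof.
move=> smF Xs Xs_su21; have [cont cvg_dq] := smF Xs Xs_su21.
rewrite iter_der_ltrans; split=> [|X g X_su21 Gg].
  apply: (continuous_within_comp (mulmx_continuous t) _ cont).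
  by move=> g /G_lmul.
by rewrite dq_ltrans; apply: cvg_dq => //; apply/G_lmul.
Qed.

End ElementOfG.

Definition dilates_N (t : M) (lam : C R) (q : R) : Prop :=
  forall b r, t *m nmat b r = nmat (lam * b) (q * r) *m t.

Lemma dilates_N_Jinv (t : M) (lam : C R) (q : R) :
  G t -> lam != 0 -> q != 0 ->
  dilates_N t lam q -> dilates_N (Jinv t) lam^-1 q^-1.
Proof.
move=> Gt lam_neq0 q_neq0 tN b r.
have := tN (lam^-1 * b) (q^-1 * r); rewrite !mulrA !divff // !mul1r => tNt.
rewrite -[LHS]mulmx1 -[1%:M](mulmxJinv Gt) mulmxA -(mulmxA (Jinv t)) -tNt.
by rewrite mulmxA (mulJinvmx Gt) mul1mx.
Qed.

Lemma Fbeta_ltrans beta1 beta2 (t : M) (lam : C R) (q : R) F :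
  G t -> dilates_N t lam q -> (forall b, chi beta1 (lam * b) = chi beta2 b) ->
  Fbeta beta1 F -> Fbeta beta2 (ltrans t F).
Proof.
move=> Gt tN chi_lam [F0 [FN [smF KfF]]]; split; [|split; [|split]].
- by move=> g nGg; apply: F0 => /(G_lmul Gt).
- move=> b r g Gg; rewrite /ltrans mulmxA tN -mulmxA FN ?chi_lam //.
  exact/(G_lmul Gt).
- exact: smooth_ltrans.
- exact: Kfinite_ltrans.
Qed.

Lemma gK_iso_ltrans beta1 beta2 (t : M) (lam : C R) (q : R) :
  G t -> lam != 0 -> q != 0 -> dilates_N t lam q ->
  (forall b, chi beta1 (lam * b) = chi beta2 b) ->
  gK_iso (Fbeta beta1) (Fbeta beta2) (ltrans t).
Proof.
move=> Gt lam_neq0 q_neq0 tN chi_lam.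
have chi_lamV b : chi beta2 (lam^-1 * b) = chi beta1 b.
  by rewrite -chi_lam mulrA divff // mul1r.
split; [|split; [|split]].
- by move=> F; apply: Fbeta_ltrans tN chi_lam.
- by move=> F1 F2 _ _ /(can_inj (ltransK Gt)).
- move=> H FH; exists (ltrans (Jinv t) H); last exact: ltransKV.
  apply: Fbeta_ltrans FH => //; first exact: G_Jinv.
  exact: dilates_N_Jinv Gt lam_neq0 q_neq0 tN.
- split=> [a F1 F2 _ _ | k F _ _ | X F _ _] //; first exact: ltrans_rtrans.
  by rewrite rder_ltrans.
Qed.

Lemma conj_ofR (x : R) : (ofR x)^* = ofR x.
Proof. by rewrite /ofR /Num.conj /= oppr0. Qed.

Lemma ofRM (x y : R) : ofR (x * y) = ofR x * ofR y.
Proof. by rewrite /ofR; simpc. Qed.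

Lemma iRM (x y : R) : iR (x * y) = ofR x * iR y.
Proof. by rewrite /iR /ofR; simpc. Qed.

Lemma ofR_eq0 (x : R) : (ofR x == 0) = (x == 0).
Proof. by rewrite /ofR eq_complex /= eqxx andbT. Qed.

(* [m(u) a(p)] with [m(u) = diag(u, u^-2, u)] and [a(p)] the hyperbolic
   rotation of the (e_1, e_3)-plane with [cosh = (p + p^-1) / 2]. *)
Definition ma_mx (u : C R) (p : R) : M :=
  let P := ofR p in let c := (P + P^-1) / 2 in let s := (P - P^-1) / 2 in
  \matrix_(i < 3, j < 3)
   match (i : nat), (j : nat) with
   | O, O => u * c | O, S O => 0 | O, _ => u * s
   | S O, S O => u ^- 2 | S O, _ => 0
   | _, O => u * s | _, S O => 0 | _, _ => u * c end.

Section MA.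
Variables (u : C R) (p : R).
Hypotheses (u_neq0 : u != 0) (u_unitary : u^* = u^-1) (p_neq0 : p != 0).

Let P_neq0 : ofR p != 0. Proof. by rewrite ofR_eq0. Qed.
Let two_neq0 : (2 : C R) != 0. Proof. by rewrite pnatr_eq0. Qed.

Lemma ma_mx_dilates_N : dilates_N (ma_mx u p) (ofR p * u ^+ 3) (p * p).
Proof.
have conj_b b : (ofR p * u ^+ 3 * b)^* = ofR p * u ^- 3 * b^*.
  rewrite 2!rmorphM rmorphXn -/(Num.conj (ofR p)) -/(Num.conj u) -/(Num.conj b).
  by rewrite conj_ofR u_unitary exprVn.
move=> b r; apply/matrixP; elim/ord3P; elim/ord3P.
all: rewrite !mulmx3E !mxE conj_b iRM ofRM /=.
all: by field; rewrite ?u_neq0 ?P_neq0 ?two_neq0.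
Qed.

Lemma ma_mx_G : G (ma_mx u p).
Proof.
have conj_ux (x : C R) : x^* = x -> (u * x)^* = u^-1 * x.
  by move=> x_real; rewrite rmorphM -/(Num.conj u) -/(Num.conj x) x_real u_unitary.
have conj_c : ((ofR p + (ofR p)^-1) / 2)^* = (ofR p + (ofR p)^-1) / 2.
  by rewrite rmorphM rmorphD !fmorphV rmorph_nat -/(Num.conj (ofR p)) conj_ofR.
have conj_s : ((ofR p - (ofR p)^-1) / 2)^* = (ofR p - (ofR p)^-1) / 2.
  by rewrite rmorphM rmorphB !fmorphV rmorph_nat -/(Num.conj (ofR p)) conj_ofR.
have conj_u2 : (u ^- 2)^* = u ^+ 2.
  by rewrite fmorphV rmorphXn -/(Num.conj u) u_unitary exprVn invrK.
split; last first.
  by rewrite det_mx33 !mxE /=; field; rewrite ?u_neq0 ?P_neq0 ?two_neq0.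
apply/matrixP; elim/ord3P; elim/ord3P; rewrite /adj !mulmx3E !mxE /=.
all: rewrite ?(conj_ux _ conj_c) ?(conj_ux _ conj_s) ?conj_u2 ?rmorph0.
all: by field; rewrite ?u_neq0 ?P_neq0 ?two_neq0.
Qed.

End MA.

Lemma dilation_exists (lam : C R) : lam != 0 ->
  exists t q, [/\ G t, q != 0 & dilates_N t lam q].
Proof.
move=> lam_neq0; have nlam_neq0 : `|lam| != 0 by rewrite normr_eq0.
pose p := Normc.normc lam; have normE : ofR p = `|lam| by [].
have p_neq0 : p != 0 by rewrite -ofR_eq0 normE.
pose u := 3.-root (lam / `|lam|); have u3 : u ^+ 3 = lam / `|lam| by rewrite rootCK.
have norm_u : `|u| = 1.
  by apply/eqP; rewrite -(@pexpr_eq1 _ _ 3) // -normrX u3 normf_div normr_id divff.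
have u_neq0 : u != 0 by rewrite -normr_eq0 norm_u oner_eq0.
have u_unitary : u^* = u^-1.
  by apply: (mulfI u_neq0); rewrite -normCK norm_u expr1n divff.
have lamE : lam = ofR p * u ^+ 3 by rewrite u3 normE mulrC divfK.
exists (ma_mx u p), (p * p); split; first exact: ma_mx_G u_neq0 u_unitary p_neq0.
  exact: mulf_neq0.
by rewrite lamE; exact: ma_mx_dilates_N u_neq0 u_unitary p_neq0.
Qed.

Lemma chi_scale (beta1 beta2 b : C R) : beta1 != 0 ->
  chi beta1 (beta2^* / beta1^* * b) = chi beta2 b.
Proof.
move=> beta1_neq0; rewrite /chi; congr (expi (_ * ReC _)).
by field; rewrite conjC_eq0.
Qed.

End SU21.

Theorem proposition8p2 (R : realType) (beta1 beta2 : C R) :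
  beta1 != 0 -> beta2 != 0 ->
  exists Phi : ('M[C R]_3 -> C R) -> ('M[C R]_3 -> C R),
    gK_iso (Fbeta beta1) (Fbeta beta2) Phi.
Proof.
move=> beta1_neq0 beta2_neq0; set lam := beta2^* / beta1^*.
have lam_neq0 : lam != 0 by rewrite mulf_neq0 ?invr_eq0 ?conjC_eq0.
have [t [q [Gt q_neq0 tN]]] := dilation_exists lam lam_neq0.
exists (ltrans t); apply: gK_iso_ltrans Gt lam_neq0 q_neq0 tN _ => b.
exact: chi_scale.
Qed.
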